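(* If $G\subset\Sigma_n$ does not act isotypically on $\{1,\dots,n\}$, then $|\Pi_n|^G$ is $W_{\Sigma_n}(G)$-equivariantly collapsible.
   Context: $\Pi_n$ is the poset of proper nontrivial partitions of $\{1,\dots,n\}$ ordered by refinement; $|\Pi_n|$ is the realisation of its order complex, with the induced $\Sigma_n$-action, and $|\Pi_n|^G$ its $G$-fixed points with action of $W_{\Sigma_n}(G)=N_{\Sigma_n}(G)/G$. $G$ acts isotypically if all $G$-orbits on $\{1,\dots,n\}$ are isomorphic $G$-sets. Equivariantly collapsible means reducible to a point by finitely many elementary equivariant collapses. *)

From HB Require Import structures.
From mathcomp Require Import all_boot all_fingroup.
Set Implicit Arguments. Unset Strict Implicit. Unset Printing Implicit Defensive.

(* A (finite, abstract) simplicial complex on a vertex finType V is given by its set of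
   nonempty faces K : {set {set V}}. *)

Section Collapse.
Variables (V I : finType) (act : I -> V -> V) (H : {set I}).

Definition elem_equiv_collapse (K K' : {set {set V}}) : Prop :=
  exists s t : {set V},
    [/\ s \in K, t \in K, s \proper t & #|t| = #|s|.+1] /\
    (forall r, r \in K -> s \subset r -> r = s \/ r = t) /\
    K' = K :\: [set act g @: x | g : I in H, x : {set V} in [set s; t]].

Inductive equiv_collapsible : {set {set V}} -> Prop :=
  | ecoll_point (v : V) : equiv_collapsible [set [set v]]
  | ecoll_step (K K' : {set {set V}}) :
      elem_equiv_collapse K K' -> equiv_collapsible K' -> equiv_collapsible K.

End Collapse.

Section Partitions.
Variable n : nat.

Definition part := {set {set 'I_n}}.

(* set partitions of {1..n} (here 'I_n), no empty blocks *)
Definition is_part (P : part) : bool := partition P [set: 'I_n].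

Definition discrete_part : part := [set [set x] | x : 'I_n].
Definition indiscrete_part : part := [set [set: 'I_n]].

Definition in_Pi (P : part) : bool :=
  [&& is_part P, P != discrete_part & P != indiscrete_part].

Definition refines (P Q : part) : bool :=
  [forall B in P, exists C in Q, B \subset C].

Definition act_part (g : {perm 'I_n}) (P : part) : part := [set g @: B | B : {set 'I_n} in P].

Definition in_Pi_fix (G : {set {perm 'I_n}}) (P : part) : bool :=
  in_Pi P && [forall g in G, act_part g P == P].

(* Order complex of Pi_n^G: nonempty chains; its realisation is |Pi_n|^G. *)
Definition fixed_order_complex (G : {set {perm 'I_n}}) : {set {set part}} :=
  [set s : {set part} | [&& s != set0,
     [forall P in s, in_Pi_fix G P] &
     [forall P in s, forall Q in s, refines P Q || refines Q P]]].

Definition orbG (G : {set {perm 'I_n}}) (x : 'I_n) : {set 'I_n} := [set g x | g : {perm 'I_n} in G].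

Definition isotypic (G : {set {perm 'I_n}}) : Prop :=
  forall x y : 'I_n, exists f : 'I_n -> 'I_n,
    [/\ {in orbG G x &, injective f},
        f @: orbG G x = orbG G y
      & forall g z, g \in G -> z \in orbG G x -> f (g z) = g (f z)].

End Partitions.

From mathcomp Require Import all_boot all_fingroup.
Set Implicit Arguments. Unset Strict Implicit. Unset Printing Implicit Defensive.

(* Call x and y isotypic when their stabilisers are conjugate in G, i.e. when
   their G-orbits are isomorphic G-sets, and let c be the partition into
   isotypic classes.  As G is not isotypic, c is a proper nontrivial
   partition, and it is fixed by N(G).  For Q in Pi_n^G the meet Q /\ c is
   again in Pi_n^G: were it discrete, the points of a block of Q would have
   equal stabilisers, hence be isotypic, and Q itself would be discrete.  So
   Pi_n^G is an N(G)-poset with a fixed element c with which every element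
   has a meet, and its order complex collapses equivariantly: a chain with
   elements not below c is matched with the chain obtained by adding or
   removing Q /\ c, Q its least element not below c, while the chains below c
   form a cone with apex c. *)

Lemma imsetD_in (aT rT : finType) (f : aT -> rT) (D A B : {set aT}) :
  {in D &, injective f} -> A \subset D -> B \subset D ->
  f @: (A :\: B) = f @: A :\: f @: B.
Proof.
move=> injf sAD sBD; apply/setP=> y; apply/imsetP/setDP => [[x /setDP[Ax NBx] ->]|].
  split; first exact: imset_f.
  apply/negP=> /imsetP[x' Bx' eqfx]; move: NBx.
  by rewrite (injf x x' (subsetP sAD x Ax) (subsetP sBD x' Bx') eqfx) Bx'.
case=> /imsetP[x Ax ->] NBfx; exists x => //; rewrite inE Ax andbT.
by apply: contra NBfx; apply: imset_f.
Qed.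

Lemma acts_closed (aT : finGroupType) (rT : finType) (to : {action aT &-> rT})
    (A : {set aT}) (S : {set rT}) :
  {in A, forall a x, x \in S -> to x a \in S} -> [acts A, on S | to].
Proof.
move=> clS; apply/subsetP=> a Aa; rewrite !inE /=.
by apply/subsetP=> x Sx; rewrite inE clS.
Qed.

Section EquivariantCollapse.
Variables (V : finType) (I : finGroupType) (to : {action I &-> V}) (H : {group I}).
Local Notation collapsible := (equiv_collapsible (fun g x => to x g) H).

Lemma collapse_orbitsE s t :
  [set (fun x => to x g) @: u | g : I in H, u : {set V} in [set s; t]] =
  orbit to^* H s :|: orbit to^* H t.
Proof. by rewrite imset2Ur !imset2_set1r. Qed.

Section Matching.
Variables (L D0 : {set {set V}}) (ap : {set V} -> V) (wt : {set V} -> nat).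
Local Notation up s := (ap s |: s).
Hypothesis L_collapsible : collapsible L.
Hypothesis ap_act : {in H, forall g, {in D0, forall s, ap (to^* s g) = to (ap s) g}}.
Hypothesis ap_notin : {in D0, forall s, ap s \notin s}.
Hypothesis up_inj : {in D0 &, injective (fun s => up s)}.
Hypothesis wt_lt : {in D0 &, forall s t : {set V}, s \subset up t -> s != t -> wt s < wt t}.
Hypothesis D0_not_sub_L : {in L & D0, forall r s : {set V}, ~~ (s \subset r)}.

Let up_notin s : s \in D0 -> up s \notin D0.
Proof.
move=> D0s; apply/negP=> D0up.
have neq : s != up s by apply: contraNneq (ap_notin D0s) => {2}->; rewrite setU11.
have := wt_lt D0s D0up (subset_trans (subsetUr _ _) (subsetUr _ _)) neq.
by rewrite ltnNge ltnW // wt_lt // eq_sym.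
Qed.

Let disjoint_L_D0 : [disjoint L & D0].
Proof.
apply/pred0P=> r /=; apply/negbTE/andP=> -[Lr D0r].
by have := D0_not_sub_L Lr D0r; rewrite subxx.
Qed.

Let disjoint_L_up : [disjoint L & [set up s | s in D0]].
Proof.
apply/pred0P=> r /=; apply/negbTE/andP=> -[Lr /imsetP[s D0s eqr]].
by have := D0_not_sub_L Lr D0s; rewrite eqr subsetUr.
Qed.

Let disjoint_D0_up : [disjoint D0 & [set up s | s in D0]].
Proof.
apply/pred0P=> r /=; apply/negbTE/andP=> -[D0r /imsetP[s D0s eqr]].
by have := up_notin D0s; rewrite -eqr D0r.
Qed.

Let up_act g s : g \in H -> s \in D0 -> up (to^* s g) = to^* (up s) g.
Proof. by move=> Hg D0s; rewrite ap_act // !setactE imsetU1. Qed.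

Let matching_setD (D O : {set {set V}}) : D \subset D0 -> O \subset D ->
  (L :|: D :|: [set up s | s in D]) :\: (O :|: [set up u | u in O]) =
  L :|: (D :\: O) :|: [set up u | u in D :\: O].
Proof.
move=> sDD0 sOD; have sOD0 := subset_trans sOD sDD0.
have sUO : [set up u | u in O] \subset [set up u | u in D0] by apply: imsetS.
rewrite !setDUl; congr (_ :|: _ :|: _).
- rewrite setDUr (setDidPl (disjointWr sOD0 disjoint_L_D0)).
  by rewrite (setDidPl (disjointWr sUO disjoint_L_up)) setIid.
- rewrite setDUr (setDidPl (disjointWr sUO (disjointWl sDD0 disjoint_D0_up))).
  exact/setIidPl/subsetDl.
have disjoint_up_O : [disjoint [set up u | u in D] & O].
  by rewrite disjoint_sym (disjointW sOD0 (imsetS _ sDD0) disjoint_D0_up).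
rewrite setDUr (setDidPl disjoint_up_O) (setIidPr (subsetDl _ _)).
by rewrite (imsetD_in up_inj sDD0 sOD0).
Qed.

(* A face [s] of maximal weight in [D] is free in [up s]; collapsing the orbits
   of [s] and [up s] leaves the same configuration over [D] minus that orbit. *)
Lemma collapsible_matching_sub (D : {set {set V}}) :
  D \subset D0 -> [acts H, on D | to^*] ->
  collapsible (L :|: D :|: [set up s | s in D]).
Proof.
move: {2}#|D| (leqnn #|D|) => k; elim: k D => [|k IH] D.
  by rewrite leqn0 cards_eq0 => /eqP-> *; rewrite imset0 !setU0.
move=> leDk sDD0 D_acts.
have [->|[s0 Ds0]] := set_0Vmem D; first by rewrite imset0 !setU0.
have [s Ds smax] := arg_maxnP wt Ds0.
have {}Ds : s \in D := Ds.
have {}smax u : u \in D -> wt u <= wt s := smax u.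
have D0s := subsetP sDD0 s Ds.
set O := orbit to^* H s.
have Os : s \in O := orbit_refl _ _ _.
have sOD : O \subset D by rewrite acts_sub_orbit.
have upO : orbit to^* H (up s) = [set up u | u in O].
  by rewrite /orbit -imset_comp; apply: eq_in_imset => g Hg /=; rewrite up_act.
apply: (ecoll_step (K' := L :|: (D :\: O) :|: [set up u | u in D :\: O])).
  exists s, (up s); split; first split.
  - by rewrite !inE Ds orbT.
  - by rewrite in_setU; apply/orP; right; apply: imset_f.
  - by rewrite properUr // sub1set ap_notin.
  - by rewrite cardsU1 ap_notin.
  split; last by rewrite collapse_orbitsE upO matching_setD.
  move=> r; rewrite !inE => /orP[/orP[Lr|Dr]|/imsetP[u Du ->]] sr.
  - by have := D0_not_sub_L Lr D0s; rewrite sr.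
  - left; apply/eqP; apply: contraT => neq_rs; have := smax r Dr.
    by rewrite leqNgt wt_lt ?(subsetP sDD0) ?(subset_trans sr (subsetUr _ _)) // eq_sym.
  - right; have [->//|neq_su] := eqVneq s u; have := smax u Du.
    by rewrite leqNgt wt_lt ?(subsetP sDD0).
apply: IH.
- rewrite -ltnS; apply: leq_trans leDk; apply: proper_card; rewrite properE subsetDl /=.
  by apply/subsetPn; exists s; rewrite // inE Os.
- exact: subset_trans (subsetDl _ _) sDD0.
- by apply: actsD => //; apply: acts_orbit; apply: subsetT.
Qed.

Lemma collapsible_matching :
  [acts H, on D0 | to^*] -> collapsible (L :|: D0 :|: [set up s | s in D0]).
Proof. exact: collapsible_matching_sub. Qed.

End Matching.

Lemma collapsible_cone c (D : {set {set V}}) :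
  c \in ('Fix_to(H))%g -> [acts H, on D | to^*] ->
  {in D, forall s : {set V}, c \notin s} -> set0 \notin D ->
  collapsible ([set [set c]] :|: D :|: [set c |: s | s in D]).
Proof.
move=> /afixP c_fixed D_acts cND D_neq0.
apply: (collapsible_matching (wt := fun s => #|s|)) => //.
- exact: ecoll_point.
- by move=> g Hg s _; rewrite c_fixed.
- by move=> s t Ds Dt /= eq_st; rewrite -(setU1K (cND s Ds)) eq_st setU1K ?cND.
- move=> s t Ds Dt /= s_ct neq_st; apply: proper_card; rewrite properEneq neq_st /=.
  apply/subsetP=> x sx; move: (subsetP s_ct x sx); rewrite in_setU1 => /orP[/eqP xc|//].
  by move: (cND s Ds); rewrite -xc sx.
- move=> _ s /set1P-> Ds; rewrite subset1; apply/norP; split; apply/eqP=> eq_s.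
    by move: (cND s Ds); rewrite eq_s set11.
  by move: D_neq0; rewrite -eq_s Ds.
Qed.

End EquivariantCollapse.

Section OrderComplex.
Variables (V : finType) (X : {set V}) (le : rel V).
Implicit Types (s t : {set V}) (P Q R : V).

Definition chains : {set {set V}} :=
  [set s : {set V} | [&& s != set0, s \subset X &
     [forall P in s, forall Q in s, le P Q || le Q P]]].

Lemma chainP s :
  reflect [/\ s != set0, s \subset X & {in s &, forall P Q, le P Q || le Q P}]
          (s \in chains).
Proof.
rewrite inE; apply: (iffP and3P) => -[s_neq0 sX s_chain]; split=> //.
  by move=> P Q sP sQ; move/forall_inP/(_ P sP)/forall_inP: s_chain; apply.
by apply/forall_inP=> P sP; apply/forall_inP=> Q sQ; apply: s_chain.
Qed.

Lemma chains_sub s t : s \in chains -> t != set0 -> t \subset s -> t \in chains.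
Proof.
case/chainP=> _ sX s_chain t_neq0 ts; apply/chainP; split=> //.
  exact: subset_trans ts sX.
by move=> P Q /(subsetP ts) sP /(subsetP ts) sQ; apply: s_chain.
Qed.

Variables (I : finGroupType) (to : {action I &-> V}) (H : {group I}).
Local Notation collapsible := (equiv_collapsible (fun g x => to x g) H).
Variables (c : V) (meet_c : V -> V).
Hypothesis le_refl : {in X, reflexive le}.
Hypothesis le_anti : {in X &, antisymmetric le}.
Hypothesis le_trans : {in X & &, transitive le}.
Hypothesis X_acts : [acts H, on X | to].
Hypothesis le_act : {in H, forall g, {in X &, forall P Q, le (to P g) (to Q g) = le P Q}}.
Hypothesis cX : c \in X.
Hypothesis c_fixed : c \in ('Fix_to(H))%g.
Hypothesis meet_cX : {in X, forall Q, meet_c Q \in X}.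
Hypothesis meet_c_le : {in X, forall Q, le (meet_c Q) Q}.
Hypothesis meet_c_lec : {in X, forall Q, le (meet_c Q) c}.
Hypothesis meet_c_glb : {in X &, forall Q R, le R Q -> le R c -> le R (meet_c Q)}.

Lemma chains_acts : [acts H, on chains | to^*].
Proof.
apply: acts_closed => g Hg s /chainP[s_neq0 sX s_chain]; apply/chainP; split.
- by rewrite /= setactE imset_eq0.
- apply/subsetP=> _ /imsetP[P sP ->].
  by rewrite (acts_act X_acts) ?(subsetP sX).
- move=> _ _ /imsetP[P sP ->] /imsetP[Q sQ ->].
  by rewrite !le_act ?s_chain ?(subsetP sX).
Qed.

Lemma meet_c_unique Q M : Q \in X -> M \in X -> le M Q -> le M c ->
  {in X, forall R, le R Q -> le R c -> le R M} -> meet_c Q = M.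
Proof.
move=> XQ XM leMQ leMc M_glb; apply: le_anti; rewrite ?meet_cX //.
by rewrite M_glb ?meet_cX ?meet_c_le ?meet_c_lec // meet_c_glb.
Qed.

Lemma meet_c_act g Q : g \in H -> Q \in X -> meet_c (to Q g) = to (meet_c Q) g.
Proof.
move=> Hg XQ; have /afixP c_g := c_fixed.
have Xg R : R \in X -> to R g \in X by move=> XR; rewrite (acts_act X_acts).
have XmQ := meet_cX XQ.
apply: meet_c_unique; rewrite ?Xg ?le_act ?meet_c_le //.
  by rewrite -{1}(c_g g Hg) le_act ?meet_c_lec.
move=> R XR; have Hg' : (g^-1)%g \in H by rewrite groupV.
have XR' : to R (g^-1)%g \in X by rewrite (acts_act X_acts).
rewrite -(actKV to g R) -{1}(c_g g Hg) !le_act ?meet_cX //.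
exact: meet_c_glb.
Qed.

Definition upset_size P := #|[set Q in X | le P Q]|.

Lemma upset_size_lt P Q :
  P \in X -> Q \in X -> le P Q -> P != Q -> upset_size Q < upset_size P.
Proof.
move=> XP XQ lePQ neqPQ; apply: proper_card; rewrite properE; apply/andP; split.
  apply/subsetP=> R; rewrite !inE => /andP[XR leQR].
  by rewrite XR (le_trans XQ XP XR).
apply/subsetPn; exists P; first by rewrite inE XP le_refl.
by rewrite inE XP /=; apply: contra neqPQ => leQP; rewrite (le_anti XP XQ) ?lePQ.
Qed.

Definition is_min_notbelow (s : {set V}) Q :=
  [&& Q \in s, ~~ le Q c & [forall P in s, ~~ le P c ==> le Q P]].

Definition min_notbelow (s : {set V}) := odflt c [pick Q | is_min_notbelow s Q].

Lemma is_min_notbelowP s Q :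
  reflect [/\ Q \in s, ~~ le Q c & {in s, forall P, ~~ le P c -> le Q P}]
          (is_min_notbelow s Q).
Proof.
apply: (iffP and3P) => -[sQ NQc Q_min]; split=> //.
  by move=> P sP; move/forall_inP/(_ P sP)/implyP: Q_min.
by apply/forall_inP=> P sP; apply/implyP; apply: Q_min.
Qed.

Lemma min_notbelow_eq s Q : s \subset X -> is_min_notbelow s Q -> min_notbelow s = Q.
Proof.
move=> sX Q_min; rewrite /min_notbelow; case: pickP => [Q' Q'_min|/(_ Q)]; last first.
  by rewrite Q_min.
case/is_min_notbelowP: Q_min => sQ NQc Q_min.
case/is_min_notbelowP: Q'_min => sQ' NQc' Q'_min.
apply: le_anti; rewrite ?(subsetP sX Q sQ) ?(subsetP sX Q' sQ') //=.
by rewrite (Q_min Q') ?(Q'_min Q).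
Qed.

Lemma min_notbelow_exists s P : s \in chains -> P \in s -> ~~ le P c ->
  is_min_notbelow s (min_notbelow s).
Proof.
case/chainP=> _ sX s_chain sP NPc.
have sP_Nc : P \in [pred R in s | ~~ le R c] by rewrite inE sP.
have [Q /andP[sQ NQc] Q_max] := arg_maxnP upset_size sP_Nc.
suff Q_min : is_min_notbelow s Q by rewrite (min_notbelow_eq sX Q_min).
apply/is_min_notbelowP; split=> // R sR NRc; have /orP[//|leRQ] := s_chain Q R sQ sR.
have [->|neqRQ] := eqVneq R Q; first by rewrite le_refl ?(subsetP sX).
have := Q_max R; rewrite /= sR NRc => /(_ isT) /=.
by rewrite leqNgt upset_size_lt ?(subsetP sX).
Qed.

Local Notation partner s := (meet_c (min_notbelow s)).

Definition chains_below := [set s in chains | [forall P in s, le P c]].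

Lemma chains_belowP s :
  reflect (s \in chains /\ {in s, forall P, le P c}) (s \in chains_below).
Proof.
by rewrite [s \in chains_below]inE; apply: (iffP andP) => -[s_chain /forall_inP].
Qed.

Definition matched_chains :=
  [set s in chains | [exists P in s, ~~ le P c] && (partner s \notin s)].

Lemma matched_chains_spec s :
  s \in matched_chains ->
  [/\ s \in chains, is_min_notbelow s (min_notbelow s) & partner s \notin s].
Proof.
rewrite inE => /andP[s_chain /andP[/exists_inP[P sP NPc] s_partner]].
by split=> //; apply: min_notbelow_exists sP NPc.
Qed.

Lemma min_notbelowX s : s \in matched_chains -> min_notbelow s \in X.
Proof.
by case/matched_chains_spec=> /chainP[_ sX _] /is_min_notbelowP[sQ _ _] _; apply: (subsetP sX).
Qed.

Lemma partner_chain s : s \in matched_chains -> partner s |: s \in chains.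
Proof.
move=> s_match; have XQ := min_notbelowX s_match; have Xpartner := meet_cX XQ.
case/matched_chains_spec: s_match => /chainP[_ sX s_chain] /is_min_notbelowP[sQ NQc Q_min] _.
have partner_cmp P : P \in s -> le (partner s) P || le P (partner s).
  move=> sP; have XP := subsetP sX P sP.
  have [leQc|NPc] := boolP (le P c).
    have /orP[lePQ|leQP] := s_chain P _ sP sQ; last by rewrite (le_trans XQ) ?meet_c_le.
    by rewrite meet_c_glb ?orbT.
  by rewrite (le_trans XQ) ?meet_c_le ?Q_min.
apply/chainP; split.
- by apply/set0Pn; exists (partner s); rewrite setU11.
- by rewrite subUset sub1set Xpartner.
- move=> P R /setU1P[->|sP] /setU1P[->|sR]; rewrite ?le_refl ?partner_cmp //.
  + by rewrite orbC partner_cmp.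
  + exact: s_chain.
Qed.

Lemma min_notbelow_partner s :
  s \in matched_chains -> min_notbelow (partner s |: s) = min_notbelow s.
Proof.
move=> s_match; have XQ := min_notbelowX s_match.
case/matched_chains_spec: s_match => /chainP[_ sX _] /is_min_notbelowP[sQ NQc Q_min] _.
apply: min_notbelow_eq; first by rewrite subUset sub1set meet_cX.
apply/is_min_notbelowP; split; rewrite ?setU1r // => P /setU1P[->|/Q_min //].
by rewrite meet_c_lec.
Qed.

Lemma min_notbelow_act g s :
  g \in H -> s \in matched_chains -> min_notbelow (to^* s g) = to (min_notbelow s) g.
Proof.
move=> Hg s_match; have XQ := min_notbelowX s_match; have /afixP c_g := c_fixed.
case/matched_chains_spec: s_match => s_chain /is_min_notbelowP[sQ NQc Q_min] _.
have /chainP[_ sX _] := s_chain.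
have /chainP[_ gsX _] : to^* s g \in chains by rewrite (acts_act chains_acts).
apply: min_notbelow_eq => //; apply/is_min_notbelowP; split.
- exact: mem_setact.
- by rewrite -{1}(c_g g Hg) le_act.
- move=> _ /imsetP[P sP ->]; rewrite -{1}(c_g g Hg) !le_act ?(subsetP sX P sP) //.
  exact: Q_min.
Qed.

Lemma matched_chains_acts : [acts H, on matched_chains | to^*].
Proof.
apply: acts_closed => g Hg s s_match; have XQ := min_notbelowX s_match.
have /afixP c_g := c_fixed.
have [s_chain /is_min_notbelowP[sQ NQc _] Npartner] := matched_chains_spec s_match.
rewrite inE /= (acts_act chains_acts) // s_chain /= min_notbelow_act //.
apply/andP; split.
  apply/exists_inP; exists (to (min_notbelow s) g); first exact: mem_setact.
  by rewrite -{1}(c_g g Hg) le_act.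
by rewrite meet_c_act //; apply: contra Npartner => /imsetP[P sP /act_inj->].
Qed.

Lemma chainsE :
  chains = chains_below :|: matched_chains :|: [set partner s |: s | s in matched_chains].
Proof.
apply/setP=> s; apply/idP/idP; last first.
  rewrite !in_setU => /orP[/orP[|]|/imsetP[u u_match ->]].
  - by rewrite inE => /andP[].
  - by rewrite inE => /andP[].
  - exact: partner_chain.
move=> s_chain; rewrite !in_setU; have /chainP[_ sX _] := s_chain.
have [/exists_inP[P sP NPc]|all_below] := boolP [exists P in s, ~~ le P c]; last first.
  apply/orP; left; apply/orP; left; rewrite inE s_chain; apply/forall_inP=> P sP.
  by apply: contraR all_below => NPc; apply/exists_inP; exists P.
have /is_min_notbelowP[sQ NQc Q_min] := min_notbelow_exists s_chain sP NPc.
have [partner_s|Npartner] := boolP (partner s \in s); last first.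
  apply/orP; left; apply/orP; right; rewrite inE s_chain Npartner andbT.
  by apply/exists_inP; exists P.
have neqQ : min_notbelow s != partner s.
  by apply: contraNneq NQc => ->; rewrite meet_c_lec ?(subsetP sX).
set s' := s :\ partner s.
have s'Q : min_notbelow s \in s' by rewrite !inE neqQ sQ.
have min_notbelow_s' : min_notbelow s' = min_notbelow s.
  apply: min_notbelow_eq; first exact: subset_trans (subD1set _ _) sX.
  by apply/is_min_notbelowP; split=> // R /setD1P[_ sR]; apply: Q_min.
apply/orP; right; apply/imsetP; exists s'; last by rewrite min_notbelow_s' setD1K.
rewrite inE (chains_sub s_chain) ?subD1set //=; last by apply/set0Pn; exists (min_notbelow s).
rewrite min_notbelow_s' setD11 andbT.
by apply/exists_inP; exists (min_notbelow s).
Qed.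

Lemma partner_inj : {in matched_chains &, injective (fun s => partner s |: s)}.
Proof.
move=> s t s_match t_match /= eq_st.
have eq_partner : partner s = partner t.
  by rewrite -(min_notbelow_partner s_match) -(min_notbelow_partner t_match) eq_st.
have [_ _ Ns] := matched_chains_spec s_match; have [_ _ Nt] := matched_chains_spec t_match.
by rewrite -(setU1K Ns) -(setU1K Nt) eq_st eq_partner.
Qed.

(* Lexicographic: first [upset_size (min_notbelow s)], then [#|s| <= #|V|]. *)
Definition matching_weight s := (upset_size (min_notbelow s) * #|V|.+1 + #|s|)%N.

Lemma matching_weight_lt s t : s \in matched_chains -> t \in matched_chains ->
  s \subset partner t |: t -> s != t -> matching_weight s < matching_weight t.
Proof.
move=> s_match t_match s_sub neq_st.
have XQs := min_notbelowX s_match; have XQt := min_notbelowX t_match.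
have [_ /is_min_notbelowP[sQs NQsc _] Ns] := matched_chains_spec s_match.
have [_ /is_min_notbelowP[_ _ Qt_min] _] := matched_chains_spec t_match.
have tQs : min_notbelow s \in t.
  move: (subsetP s_sub _ sQs); rewrite in_setU1 => /orP[/eqP eqQ|//].
  by move: NQsc; rewrite eqQ meet_c_lec.
rewrite /matching_weight; have [eqQ|neqQ] := eqVneq (min_notbelow t) (min_notbelow s).
  rewrite eqQ ltn_add2l; apply: proper_card.
  rewrite properEneq neq_st /=; apply/subsetP=> P sP.
  move: (subsetP s_sub P sP); rewrite in_setU1 => /orP[/eqP ePt|//].
  by move: Ns; rewrite -eqQ -ePt sP.
have lt_size := upset_size_lt XQt XQs (Qt_min _ tQs NQsc) neqQ.
apply: (@leq_trans ((upset_size (min_notbelow s)).+1 * #|V|.+1)).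
  by rewrite mulSn addnC ltn_add2r ltnS max_card.
by apply: leq_trans (leq_addr _ _); rewrite leq_mul2r lt_size orbT.
Qed.

Lemma collapse_to_chains_below : collapsible chains_below -> collapsible chains.
Proof.
move=> below_collapsible; rewrite chainsE.
apply: (collapsible_matching (wt := matching_weight)) => //.
- by move=> g Hg s s_match; rewrite min_notbelow_act // meet_c_act ?min_notbelowX.
- by move=> s /matched_chains_spec[].
- exact: partner_inj.
- exact: matching_weight_lt.
- move=> r s /chains_belowP[_ r_below] /matched_chains_spec[_ /is_min_notbelowP[sQ NQc _] _].
  by apply: contra NQc => /subsetP/(_ _ sQ)/r_below.
- exact: matched_chains_acts.
Qed.

Lemma chains_below_acts : [acts H, on chains_below | to^*].
Proof.
have /afixP c_g := c_fixed.
apply: acts_closed => g Hg s /chains_belowP[s_chain s_below].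
have /chainP[_ sX _] := s_chain.
apply/chains_belowP; split; first by rewrite (acts_act chains_acts).
by move=> _ /imsetP[P sP ->]; rewrite -(c_g g Hg) le_act ?(subsetP sX P sP) ?s_below.
Qed.

Definition cone_base := [set s in chains_below | c \notin s].

Lemma chains_belowE :
  chains_below = [set [set c]] :|: cone_base :|: [set c |: s | s in cone_base].
Proof.
apply/setP=> s; rewrite !in_setU in_set1; apply/idP/idP.
  move=> s_below; have [cs|Ncs] := boolP (c \in s); last by rewrite inE s_below Ncs orbT.
  have [//|neq_sc] := eqVneq s [set c].
  apply/orP; right; apply/imsetP; exists (s :\ c); last by rewrite setD1K.
  case/chains_belowP: s_below => s_chain s_below.
  rewrite inE setD11 andbT; apply/chains_belowP; split.
    apply: chains_sub s_chain _ (subD1set _ _).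
    by apply: contraNneq neq_sc => s0; rewrite -(setD1K cs) s0 setU0.
  by move=> P /setD1P[_ /s_below].
case/orP=> [/orP[/eqP->|]|/imsetP[u]].
- apply/chains_belowP; split; last by move=> P /set1P->; apply: le_refl.
  apply/chainP; split; first by apply/set0Pn; exists c; rewrite inE.
    by rewrite sub1set.
  by move=> P R /set1P-> /set1P->; rewrite le_refl.
- by rewrite inE => /andP[].
rewrite inE => /andP[/chains_belowP[u_chain u_below] _] ->.
have /chainP[_ uX u_cmp] := u_chain.
apply/chains_belowP; split; last by move=> P /setU1P[->|/u_below //]; apply: le_refl.
apply/chainP; split; first by apply/set0Pn; exists c; rewrite setU11.
  by rewrite subUset sub1set cX.
move=> P R /setU1P[->|uP] /setU1P[->|uR]; rewrite ?le_refl ?u_below ?orbT //.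
exact: u_cmp.
Qed.

Lemma chains_below_collapsible : collapsible chains_below.
Proof.
have /afixP c_g := c_fixed.
rewrite chains_belowE; apply: collapsible_cone => //.
- apply: acts_closed => g Hg s; rewrite [s \in _]inE => /andP[s_below Ncs].
  rewrite inE /= (acts_act chains_below_acts) // s_below -(c_g g Hg) /=.
  by apply: contra Ncs => /imsetP[P sP /act_inj->].
- by move=> s; rewrite inE => /andP[].
- by rewrite inE negb_and; apply/orP; left; apply/chains_belowP=> -[/chainP[]]; rewrite eqxx.
Qed.

Theorem chains_collapsible : collapsible chains.
Proof. exact/collapse_to_chains_below/chains_below_collapsible. Qed.

End OrderComplex.

Local Open Scope group_scope.

Section Partitions.
Variable n : nat.
Local Notation T := 'I_n.
Implicit Types (P Q R : part n) (g : {perm T}) (x y : T).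

Definition part_action : {action {perm T} &-> part n} := ('P^*)^*%act.

Lemma part_actionE P g : part_action P g = act_part g P.
Proof. by []. Qed.

Section OnePartition.
Variables (P : part n) (partP : is_part P).

Lemma pblock_refl x : x \in pblock P x.
Proof. by case/and3P: partP => /eqP coverP _ _; rewrite mem_pblock coverP inE. Qed.

Lemma pblock_in x : pblock P x \in P.
Proof. by case/and3P: partP => /eqP coverP _ _; rewrite pblock_mem // coverP inE. Qed.

Lemma pblock_def B x : B \in P -> x \in B -> pblock P x = B.
Proof. by case/and3P: partP => _ triP _; apply: def_pblock. Qed.

Lemma pblock_eq x y : y \in pblock P x -> pblock P y = pblock P x.
Proof. by case/and3P: partP => _ triP _; apply: same_pblock. Qed.

Lemma eq_pblockE x y : (pblock P x == pblock P y) = (y \in pblock P x).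
Proof. by case/and3P: partP => /eqP coverP triP _; rewrite eq_pblock // coverP inE. Qed.

Lemma part_pblockE : P = [set pblock P x | x : T].
Proof.
apply/setP=> B; apply/idP/imsetP => [PB|[x _ ->]]; last exact: pblock_in.
have /set0Pn[x Bx] : B != set0 by apply: partition_neq0 partP PB.
by exists x; rewrite ?(pblock_def PB Bx).
Qed.

End OnePartition.

Lemma part_eq P Q : is_part P -> is_part Q -> pblock P =1 pblock Q -> P = Q.
Proof.
move=> partP partQ eqPQ.
by rewrite (part_pblockE partP) (part_pblockE partQ) (eq_imset _ eqPQ).
Qed.

Lemma refinesP P Q : is_part P -> is_part Q ->
  reflect (forall x, pblock P x \subset pblock Q x) (refines P Q).
Proof.
move=> partP partQ; apply: (iffP forall_inP) => [P_Q x|P_Q B PB].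
  have /exists_inP[C QC sPC] := P_Q _ (pblock_in partP x).
  by rewrite (pblock_def partQ QC (subsetP sPC x (pblock_refl partP x))).
have /set0Pn[x Bx] : B != set0 by apply: partition_neq0 partP PB.
by apply/exists_inP; exists (pblock Q x); rewrite ?pblock_in // -(pblock_def partP PB Bx).
Qed.

Lemma refines_refl P : refines P P.
Proof. by apply/forall_inP=> B PB; apply/exists_inP; exists B. Qed.

Lemma refines_trans P Q R : refines P Q -> refines Q R -> refines P R.
Proof.
move=> /forall_inP P_Q /forall_inP Q_R; apply/forall_inP=> B PB.
have /exists_inP[C QC sBC] := P_Q B PB; have /exists_inP[D RD sCD] := Q_R C QC.
by apply/exists_inP; exists D; rewrite ?(subset_trans sBC sCD).
Qed.

Lemma refines_anti P Q : is_part P -> is_part Q -> refines P Q -> refines Q P -> P = Q.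
Proof.
move=> partP partQ /(refinesP partP partQ) P_Q /(refinesP partQ partP) Q_P.
by apply: part_eq => // x; apply/eqP; rewrite eqEsubset P_Q Q_P.
Qed.

Lemma pblock_preim (rT : eqType) (f : T -> rT) x :
  pblock (preim_partition f [set: T]) x = [set y | f x == f y].
Proof.
apply/setP=> y; rewrite inE pblock_equivalence_partition ?inE //.
by split=> // /eqP->.
Qed.

Definition part_meet P Q := preim_partition (fun x => (pblock P x, pblock Q x)) [set: T].

Lemma part_meet_part P Q : is_part (part_meet P Q).
Proof. exact: preim_partitionP. Qed.

Lemma pblock_meet P Q x : is_part P -> is_part Q ->
  pblock (part_meet P Q) x = pblock P x :&: pblock Q x.
Proof.
move=> partP partQ; apply/setP=> y; rewrite pblock_preim !inE xpair_eqE.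
by rewrite !eq_pblockE.
Qed.

Section Meet.
Variables (P Q : part n) (partP : is_part P) (partQ : is_part Q).

Lemma part_meet_refinesl : refines (part_meet P Q) P.
Proof.
by apply/refinesP=> [||x]; rewrite ?part_meet_part ?pblock_meet ?subsetIl.
Qed.

Lemma part_meet_refinesr : refines (part_meet P Q) Q.
Proof.
by apply/refinesP=> [||x]; rewrite ?part_meet_part ?pblock_meet ?subsetIr.
Qed.

Lemma refines_meet R : is_part R -> refines R P -> refines R Q -> refines R (part_meet P Q).
Proof.
move=> partR /(refinesP partR partP) R_P /(refinesP partR partQ) R_Q.
by apply/refinesP=> [||x]; rewrite ?part_meet_part ?pblock_meet ?subsetI ?R_P ?R_Q.
Qed.

End Meet.

Lemma im_permT g : g @: [set: T] = [set: T].
Proof. by apply: im_perm_on; apply/subsetP=> x; rewrite inE. Qed.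

Lemma is_part_act g P : is_part (act_part g P) = is_part P.
Proof. by rewrite /is_part /act_part -{1}(im_permT g) imset_partition //; apply: perm_inj. Qed.

Lemma pblock_act g P x : is_part P -> pblock (act_part g P) (g x) = g @: pblock P x.
Proof.
move=> partP; apply: pblock_def; first by rewrite is_part_act.
  by apply: imset_f; apply: pblock_in.
by apply: imset_f; apply: pblock_refl.
Qed.

Lemma refines_act g P Q : is_part P -> is_part Q ->
  refines (act_part g P) (act_part g Q) = refines P Q.
Proof.
move=> partP partQ; have [gpartP gpartQ] : is_part (act_part g P) /\ is_part (act_part g Q).
  by rewrite !is_part_act.
apply/(refinesP gpartP gpartQ)/(refinesP partP partQ) => P_Q x.
  apply/subsetP=> y Py; have := subsetP (P_Q (g x)) (g y).
  by rewrite !pblock_act // !(mem_imset _ _ perm_inj); apply.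
by rewrite -(permKV g x) !pblock_act // imsetS.
Qed.

Lemma act_part_fixed g P : is_part P ->
  act_part g P = P <-> forall x, pblock P (g x) = g @: pblock P x.
Proof.
move=> partP; split=> [fixP x|fixP]; first by rewrite -pblock_act // fixP.
apply: part_eq; rewrite ?is_part_act // => x.
by rewrite -(permKV g x) pblock_act // fixP.
Qed.

Lemma discrete_partP P : is_part P ->
  P = discrete_part n <-> forall x, pblock P x = [set x].
Proof.
move=> partP; split=> [eqP x | P1]; last by rewrite (part_pblockE partP) (eq_imset _ P1).
have /imsetP[y _ Py] : pblock P x \in discrete_part n by rewrite -eqP pblock_in.
by move: (pblock_refl partP x); rewrite Py => /set1P->.
Qed.

Lemma pblock_indiscrete P x : is_part P -> P = indiscrete_part n -> pblock P x = [set: T].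
Proof. by move=> partP P1; have := pblock_in partP x; rewrite P1 => /set1P. Qed.

Lemma act_discrete g : act_part g (discrete_part n) = discrete_part n.
Proof.
apply/setP=> B; apply/imsetP/imsetP => [[_ /imsetP[x _ ->] ->]|[x _ ->]].
  by exists (g x); rewrite ?imset_set1.
by exists [set g^-1 x]; [apply: imset_f | rewrite imset_set1 permKV].
Qed.

Lemma act_indiscrete g : act_part g (indiscrete_part n) = indiscrete_part n.
Proof. by rewrite /act_part /indiscrete_part imset_set1 im_permT. Qed.

Lemma act_partK g : cancel (act_part g) (act_part g^-1).
Proof. exact: (actK part_action g). Qed.

Lemma in_Pi_act g P : in_Pi P -> in_Pi (act_part g P).
Proof.
case/and3P=> partP NdP NiP; rewrite /in_Pi is_part_act partP /=.
by rewrite -(act_discrete g) -(act_indiscrete g) !(inj_eq (can_inj (act_partK g))) NdP NiP.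
Qed.

Lemma act_part_meet g P Q : is_part P -> is_part Q ->
  act_part g (part_meet P Q) = part_meet (act_part g P) (act_part g Q).
Proof.
move=> partP partQ; apply: part_eq; rewrite ?is_part_act ?part_meet_part // => x.
rewrite -(permKV g x) pblock_meet ?is_part_act // !pblock_act ?part_meet_part //.
by rewrite pblock_meet // imsetI //; apply: in2W; apply: perm_inj.
Qed.

End Partitions.

Section IsotypicPartition.
Variables (n : nat) (G : {group {perm 'I_n}}).
Local Notation T := 'I_n.
Implicit Types (P Q : part n) (g k : {perm T}) (x y : T).

Definition stab_class x := 'C_G[x | 'P] :^: G.

Definition isotypic_part := preim_partition stab_class [set: T].

Lemma stab_norm g x : g \in 'N(G) -> 'C_G[g x | 'P] = 'C_G[x | 'P] :^ g.
Proof. by move=> /normP NGg; rewrite conjIg NGg -astab1_act. Qed.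

Lemma stab_class_norm g x :
  g \in 'N(G) -> stab_class (g x) = 'Js^* (stab_class x) g.
Proof. by move=> NGg; rewrite /stab_class -!orbitJs setact_orbit (normP NGg) stab_norm. Qed.

Lemma stab_class_act k x : k \in G -> stab_class (k x) = stab_class x.
Proof.
move=> Gk; rewrite /stab_class stab_norm ?(subsetP (normG G)) //.
by rewrite -!orbitJs; apply: (orbit_act 'Js).
Qed.

Lemma isotypic_part_part : is_part isotypic_part.
Proof. exact: preim_partitionP. Qed.

Lemma isotypic_part_fixed : isotypic_part \in 'Fix_(part_action n)('N(G)).
Proof.
apply/afixP=> g NGg; apply/(act_part_fixed _ isotypic_part_part) => x.
apply/setP=> y; rewrite -(permKV g y) (mem_imset _ _ perm_inj) !pblock_preim !inE.
by rewrite !stab_class_norm ?groupV // (inj_eq (act_inj _ _)).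
Qed.

Lemma act_eq_stab x y a b : 'C_G[x | 'P] \subset 'C_G[y | 'P] ->
  a \in G -> b \in G -> a x = b x -> a y = b y.
Proof.
move=> sCxy Ga Gb eq_ab; have : a * b^-1 \in 'C_G[x | 'P].
  by rewrite inE groupM ?groupV //; apply/astab1P; rewrite /= apermE permM eq_ab permK.
move/(subsetP sCxy); rewrite inE => /andP[_ /astab1P].
by rewrite /= apermE permM => /(canRL (permKV b)).
Qed.

Lemma orbit_iso_stab x y : 'C_G[x | 'P] = 'C_G[y | 'P] ->
  exists f : T -> T, [/\ {in orbG G x &, injective f}, f @: orbG G x = orbG G y
                       & forall k z, k \in G -> z \in orbG G x -> f (k z) = k (f z)].
Proof.
move=> eqC; pose f z := if [pick k in G | k x == z] is Some k then k y else z.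
have fE k : k \in G -> f (k x) = k y.
  move=> Gk; rewrite /f; case: pickP => [k' /andP[Gk' /eqP eqk']|/(_ k)]; last first.
    by rewrite Gk eqxx.
  by apply: act_eq_stab eqk'; rewrite ?eqC.
exists f; split.
- move=> _ _ /imsetP[a Ga ->] /imsetP[b Gb ->]; rewrite !fE //.
  by apply: act_eq_stab; rewrite ?eqC.
- apply/setP=> z; apply/imsetP/imsetP => [[_ /imsetP[a Ga ->] ->]|[a Ga ->]].
    by exists a; rewrite ?fE.
  by exists (a x); [apply: imset_f | rewrite fE].
- by move=> k _ Gk /imsetP[a Ga ->]; rewrite -permM !fE ?groupM // permM.
Qed.

Lemma isotypic_stab_class : (forall x y, stab_class x = stab_class y) -> isotypic G.
Proof.
move=> eq_class x y; have : 'C_G[y | 'P] \in stab_class x.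
  by rewrite (eq_class x y); apply: (orbit_refl 'Js).
case/imsetP=> g Gg eqC; rewrite /= -stab_norm ?(subsetP (normG G)) // in eqC.
have := orbit_iso_stab (esym eqC).
by rewrite -[orbG G _]/(orbit 'P G _) (orbit_act 'P x Gg).
Qed.

Lemma pblock_isotypic x y : (y \in pblock isotypic_part x) = (stab_class x == stab_class y).
Proof. by rewrite pblock_preim inE. Qed.

Lemma isotypic_pblockT : (forall x, pblock isotypic_part x = [set: T]) -> isotypic G.
Proof.
move=> cT; apply: isotypic_stab_class => x y; apply/eqP.
by rewrite -pblock_isotypic cT inE.
Qed.

Lemma isotypic_pblock1 : (forall x, pblock isotypic_part x = [set x]) -> isotypic G.
Proof.
move=> c1; have fixG x k : k \in G -> k x = x.
  by move=> Gk; apply/set1P; rewrite -c1 pblock_isotypic stab_class_act.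
have stabG x : 'C_G[x | 'P] = G.
  by apply/setIidPl/subsetP=> k Gk; apply/astab1P; rewrite /= apermE fixG.
by apply: isotypic_stab_class => x y; rewrite /stab_class !stabG.
Qed.

Section MeetIsotypic.
Variable Q : part n.
Hypotheses (partQ : is_part Q) (fixQ : Q \in 'Fix_(part_action n)(G)).

Lemma stab_sub_pblock x y :
  (forall z, pblock (part_meet Q isotypic_part) z = [set z]) ->
  y \in pblock Q x -> 'C_G[x | 'P] \subset 'C_G[y | 'P].
Proof.
move=> meet1 Qxy; apply/subsetP=> k /setIP[Gk /astab1P /= kx].
rewrite inE Gk; apply/astab1P; rewrite /= apermE; apply/set1P.
rewrite -meet1 pblock_meet ?isotypic_part_part // inE pblock_isotypic stab_class_act //.
rewrite eqxx andbT (pblock_eq partQ Qxy).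
have /(act_part_fixed _ partQ) Qk := afixP fixQ k Gk.
by rewrite -kx Qk mem_imset //; apply: perm_inj.
Qed.

Lemma meet_isotypic_discrete :
  (forall z, pblock (part_meet Q isotypic_part) z = [set z]) -> Q = discrete_part n.
Proof.
move=> meet1; apply/(discrete_partP partQ) => x; apply/eqP; rewrite eqEsubset.
rewrite sub1set pblock_refl // andbT; apply/subsetP=> y Qxy; rewrite -meet1.
have Qyx : x \in pblock Q y by rewrite (pblock_eq partQ Qxy) pblock_refl.
have eqC : 'C_G[x | 'P] = 'C_G[y | 'P].
  by apply/eqP; rewrite eqEsubset !(stab_sub_pblock meet1).
by rewrite pblock_meet ?isotypic_part_part // inE Qxy pblock_isotypic /stab_class eqC eqxx.
Qed.

End MeetIsotypic.

Lemma in_Pi_fixP P :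
  reflect (in_Pi P /\ P \in 'Fix_(part_action n)(G)) (in_Pi_fix G P).
Proof.
apply: (iffP andP) => -[PiP fixP]; split=> //.
  by apply/afixP=> k Gk; apply/eqP; move/forall_inP: fixP; apply.
by apply/forall_inP=> k Gk; rewrite -part_actionE (afixP fixP k Gk).
Qed.

Definition fixed_parts := [set P | in_Pi_fix G P].

Lemma fixed_parts_part P : P \in fixed_parts -> is_part P.
Proof. by rewrite inE => /andP[/and3P[]]. Qed.

Lemma fixed_parts_acts : [acts 'N(G), on fixed_parts | part_action n].
Proof.
apply: acts_closed => g NGg P; rewrite !inE => /in_Pi_fixP[PiP fixP].
apply/in_Pi_fixP; split; first by rewrite part_actionE in_Pi_act.
by rewrite (acts_act (acts_fix_norm _ (subxx 'N(G)))).
Qed.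

Section NotIsotypic.
Hypothesis not_isotypic : ~ isotypic G.

Lemma isotypic_part_fixed_part : isotypic_part \in fixed_parts.
Proof.
rewrite inE; apply/in_Pi_fixP; split; last first.
  exact: subsetP (afixS _ (normG G)) _ isotypic_part_fixed.
apply/and3P; split; first exact: isotypic_part_part.
  apply/eqP=> eqc; apply: not_isotypic; apply: isotypic_pblock1.
  exact/(discrete_partP isotypic_part_part).
apply/eqP=> eqc; apply: not_isotypic; apply: isotypic_pblockT => x.
exact: pblock_indiscrete isotypic_part_part eqc.
Qed.

Lemma meet_isotypic_fixed_part :
  {in fixed_parts, forall Q, part_meet Q isotypic_part \in fixed_parts}.
Proof.
move=> Q; have partc := isotypic_part_part; rewrite !inE.
case/in_Pi_fixP=> /and3P[partQ NdQ _] fixQ; apply/in_Pi_fixP; split.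
  apply/and3P; split; first exact: part_meet_part.
    apply/eqP=> eqm; move/eqP: NdQ; apply; apply: meet_isotypic_discrete => //.
    exact/(discrete_partP (part_meet_part _ _)).
  apply/eqP=> eqm; apply: not_isotypic; apply: isotypic_pblockT => x; apply/eqP.
  rewrite eqEsubset subsetT -(pblock_indiscrete x (part_meet_part _ _) eqm).
  by rewrite pblock_meet // subsetIr.
apply/afixP=> k Gk; rewrite part_actionE act_part_meet // -!part_actionE.
by rewrite (afixP fixQ) // (afixP isotypic_part_fixed) // (subsetP (normG G)).
Qed.

End NotIsotypic.

End IsotypicPartition.

Lemma fixed_order_complexE n (G : {group {perm 'I_n}}) :
  fixed_order_complex G = chains (fixed_parts G) (@refines n).
Proof.
apply/setP=> s; rewrite !inE; congr [&& _, _ & _].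
by apply/forall_inP/subsetP=> fixs P sP; have := fixs P sP; rewrite inE.
Qed.

Theorem lemma6p3 (n : nat) (G : {group {perm 'I_n}}) :
  ~ isotypic G ->
  equiv_collapsible (@act_part n) ('N(G))%g (fixed_order_complex G).
Proof.
move=> not_iso; rewrite fixed_order_complexE.
have partc := isotypic_part_part G.
apply: (@chains_collapsible _ _ _ _ (part_action n) 'N(G)%G (isotypic_part G)
          (fun Q => part_meet Q (isotypic_part G))).
- by move=> P _; apply: refines_refl.
- move=> P Q /fixed_parts_part partP /fixed_parts_part partQ /andP[].
  exact: refines_anti.
- by move=> Q P R _ _ _; apply: refines_trans.
- exact: fixed_parts_acts.
- move=> g _ P Q /fixed_parts_part partP /fixed_parts_part partQ.
  by rewrite !part_actionE refines_act.
- exact: isotypic_part_fixed_part.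
- exact: isotypic_part_fixed.
- exact: meet_isotypic_fixed_part.
- by move=> Q /fixed_parts_part partQ; apply: part_meet_refinesl.
- by move=> Q /fixed_parts_part partQ; apply: part_meet_refinesr.
- by move=> Q R /fixed_parts_part partQ /fixed_parts_part partR; apply: refines_meet.
Qed.
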